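(* Let $I\subseteq\mathbb{R}$ be an interval containing $0$ and let $f:I\to\mathbb{R}$ be such that $f|_{I\cap[0,\infty)}$ is convex and $f(-x)=-f(x)$ whenever $x$ and $-x$ both belong to $I$. Then for every family of points $a_1,\dots,a_n\in I$ such that \[ \sum_{k=1}^n a_k+(n-2)\min\{a_1,\dots,a_n\}\ge0, \] we have \[ f\left(\frac1n\sum_{k=1}^n a_k\right)\le\frac1n\sum_{k=1}^n f(a_k). \] *)

From mathcomp Require Import all_boot all_order all_algebra.
Set Implicit Arguments. Unset Strict Implicit. Unset Printing Implicit Defensive.
Import Order.TTheory GRing.Theory Num.Theory.
Local Open Scope ring_scope.

Definition is_interval (R : realDomainType) (I : R -> Prop) : Prop :=
  forall x y z, I x -> I z -> x <= y -> y <= z -> I y.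

Definition convex_on (R : realDomainType) (D : R -> Prop) (f : R -> R) : Prop :=
  forall x y t, D x -> D y -> 0 <= t -> t <= 1 ->
    f (t * x + (1 - t) * y) <= t * f x + (1 - t) * f y.

Definition fmin (R : realDomainType) (n : nat) (a : 'I_n -> R) : R :=
  match n return ('I_n -> R) -> R with
  | 0 => fun _ => 0
  | m.+1 => fun a => \big[Num.min/a ord0]_(i < m.+1) a i
  end a.

From mathcomp Require Import all_boot all_order all_algebra.
From mathcomp Require Import lra ring.
Import Order.TTheory GRing.Theory Num.Theory.
Local Open Scope ring_scope.

(* Let s be the mean of the a_i and m their minimum. If m >= 0 the claim is
   Jensen's inequality on I ∩ [0, +oo). Otherwise let Y be the mean of the
   nonnegative a_i. Since f is convex with f 0 = 0, the slope f(t)/t is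
   nondecreasing on (0, Y], and oddness gives a f(Y) <= Y f(a) for the negative
   points a, which lie in [m, 0) with -m <= Y. The hypothesis on the sum gives
   -m <= Y and 0 <= s <= Y, so Jensen on the nonnegative points yields
   Y (sum_i f(a_i)) >= (sum_i a_i) f(Y) = n s f(Y) >= n Y f(s). *)

Lemma wsum_eq0 {R : numDomainType} {T : Type} {r : seq T} {w : T -> R}
    (y : T -> R) :
  (forall i, 0 <= w i) -> \sum_(i <- r) w i = 0 -> \sum_(i <- r) w i * y i = 0.
Proof.
move=> w_ge0; elim: r => [|i r IH]; first by rewrite !big_nil.
rewrite !big_cons => /eqP.
rewrite paddr_eq0 ?w_ge0 ?sumr_ge0 //.
by case/andP=> /eqP-> /eqP/IH->; rewrite mul0r addr0.
Qed.

Lemma is_interval_nonneg {R : realDomainType} {I : R -> Prop} :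
  is_interval I -> is_interval (fun x => I x /\ 0 <= x).
Proof.
move=> hI x y z [Ix x_ge0] [Iz _] xy yz.
by split; [exact: hI _ _ _ Ix Iz xy yz | exact: le_trans xy].
Qed.

Section ConvexFunction.
Context {R : realFieldType} {D : R -> Prop} {f : R -> R}.
Hypothesis hf : convex_on D f.

Lemma convex_chord0 (t y : R) : D 0 -> D y -> f 0 = 0 -> 0 <= t -> t <= y ->
  y * f t <= t * f y.
Proof.
move=> D0 Dy f0 t_ge0 ty.
have := le_trans t_ge0 ty; rewrite le_eqVlt => /predU1P[y0|y_gt0].
  by rewrite -y0 !mul0r (_ : t = 0) ?mul0r //; lra.
have y_neq0 : y != 0 by rewrite gt_eqF.
have := hf _ _ (t / y) Dy D0 (divr_ge0 t_ge0 (ltW y_gt0)).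
rewrite ler_pdivrMr // mul1r mulr0 addr0 divfK // f0 mulr0 addr0 => /(_ ty) ft.
by rewrite -[t in t * f y](divfK y_neq0) mulrAC [X in _ <= X]mulrC ler_wpM2l // ltW.
Qed.

Hypothesis hD : is_interval D.

Lemma is_interval_convex_comb (x y t : R) : D x -> D y -> 0 <= t -> t <= 1 ->
  D (t * x + (1 - t) * y).
Proof.
move=> Dx Dy t_ge0 t_le1.
have [xy|yx] := leP x y; [apply: hD Dx Dy _ _ | apply: hD Dy Dx _ _]; nra.
Qed.

Lemma jensen (T : Type) (r : seq T) (w x : T -> R) :
  (forall i, 0 <= w i) -> (forall i, 0 < w i -> D (x i)) ->
  0 < \sum_(i <- r) w i ->
  D ((\sum_(i <- r) w i * x i) / \sum_(i <- r) w i) /\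
  (\sum_(i <- r) w i) * f ((\sum_(i <- r) w i * x i) / \sum_(i <- r) w i)
    <= \sum_(i <- r) w i * f (x i).
Proof.
move=> w_ge0 Dx; elim: r => [|i r IH]; first by rewrite big_nil ltxx.
move: IH; rewrite !big_cons.
set W := \sum_(j <- r) w j; set S := \sum_(j <- r) w j * x j.
set F := \sum_(j <- r) w j * f (x j).
move=> IH sum_gt0.
have W_ge0 : 0 <= W by apply: sumr_ge0.
have := w_ge0 i; rewrite le_eqVlt => /predU1P[wi0|wi_gt0].
  by rewrite -wi0 !mul0r !add0r; apply: IH; rewrite -wi0 add0r in sum_gt0.
move: W_ge0; rewrite le_eqVlt => /predU1P[W0|W_gt0].
  rewrite -W0 /S /F !(wsum_eq0 _ w_ge0 (esym W0)).
  by rewrite !addr0 mulrAC divff ?gt_eqF // mul1r; split => //; exact: Dx.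
have [Dc Fc] := IH W_gt0.
set c := S / W in Dc Fc *.
set t := w i / (w i + W).
have t_ge0 : 0 <= t by rewrite divr_ge0 // ltW.
have t_le1 : t <= 1 by rewrite ler_pdivrMr // mul1r lerDl ltW.
have -> : (w i * x i + S) / (w i + W) = t * x i + (1 - t) * c.
  by rewrite /t /c; field; rewrite !gt_eqF.
split; first by apply: is_interval_convex_comb => //; exact: Dx.
apply: le_trans (_ : (w i + W) * (t * f (x i) + (1 - t) * f c) <= _).
  by apply: ler_wpM2l; [rewrite ltW | apply: hf => //; exact: Dx].
have -> : (w i + W) * (t * f (x i) + (1 - t) * f c) = w i * f (x i) + W * f c.
  by rewrite /t; field; rewrite gt_eqF.
by rewrite lerD2l.
Qed.

Lemma jensen_mean n (x : 'I_n -> R) : (0 < n)%N -> (forall i, D (x i)) ->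
  f (n%:R^-1 * \sum_i x i) <= n%:R^-1 * \sum_i f (x i).
Proof.
move=> n_gt0 Dx; have n_pos : 0 < n%:R :> R by rewrite ltr0n.
have sum1 : \sum_(i < n) (1 : R) = n%:R by rewrite sumr_const card_ord.
have := @jensen _ (index_enum 'I_n) (fun=> 1) x (fun=> ler01) (fun i _ => Dx i).
rewrite sum1 !(eq_bigr _ (fun i _ => mul1r _)) => /(_ n_pos) [_].
by rewrite [_ / _]mulrC ler_pdivlMl.
Qed.

End ConvexFunction.

Lemma fmin_le {R : realDomainType} {n : nat} (a : 'I_n -> R) i : fmin a <= a i.
Proof. by case: n a i => [|n] a i; [case: i | exact: bigmin_le]. Qed.

Lemma fmin_attained {R : realDomainType} {n : nat} (a : 'I_n -> R) :
  (0 < n)%N -> exists i, a i = fmin a.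
Proof.
case: n a => [|n] a //= _.
apply: (big_ind (fun x => exists i, a i = x)); first by exists ord0.
  by move=> x y [i <-] [j <-]; rewrite /Num.min; case: ifP; [exists i | exists j].
by move=> i _; exists i.
Qed.

Section OddConvex.
Context {R : realFieldType} {I : R -> Prop} {f : R -> R}.
Hypotheses (hI : is_interval I) (hI0 : I 0).
Hypothesis hconv : convex_on (fun x => I x /\ 0 <= x) f.
Hypothesis hodd : forall x, I x -> I (- x) -> f (- x) = - f x.

Lemma odd_f0 : f 0 = 0.
Proof. by have := hodd _ hI0; rewrite oppr0 => /(_ hI0) f0; lra. Qed.

Lemma odd_convex_le (a y : R) : I a -> I y -> a <= 0 -> - a <= y ->
  a * f y <= y * f a.
Proof.
move=> Ia Iy a_le0 ay.
have Ina : I (- a) by apply: hI _ _ _ hI0 Iy _ ay; rewrite oppr_ge0.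
have na_ge0 : 0 <= - a by rewrite oppr_ge0.
have := convex_chord0 hconv _ _ (conj hI0 (lexx 0)) (conj Iy (le_trans na_ge0 ay))
  odd_f0 na_ge0 ay.
by rewrite hodd // mulrN mulNr lerN2.
Qed.

Section NegativeMinimum.
Context {n : nat} {a : 'I_n -> R}.
Hypotheses (ha : forall i, I (a i)) (hn : (1 < n)%N) (hmin : fmin a < 0).
Hypothesis hsum : 0 <= \sum_(i < n) a i + (n%:R - 2) * fmin a.

Let w i : R := if 0 <= a i then 1 else 0.
Let K : R := \sum_i w i.
Let P : R := \sum_i w i * a i.
Let N : R := \sum_i (1 - w i) * a i.

Lemma weight_ge0 i : 0 <= w i.
Proof. by rewrite /w; case: ifP. Qed.

Lemma sum_weight_split (F : 'I_n -> R) :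
  \sum_i F i = \sum_i w i * F i + \sum_i (1 - w i) * F i.
Proof. by rewrite -big_split; apply: eq_bigr => i _ /=; ring. Qed.

Lemma min_weight0 : exists2 i, a i = fmin a & w i = 0.
Proof.
have [i ai] := fmin_attained a (ltnW hn).
by exists i; rewrite // /w ai leNgt hmin.
Qed.

Lemma count_nonneg_le : K <= n%:R - 1.
Proof.
have [i0 _ wi0] := min_weight0.
have : 1 <= \sum_i (1 - w i).
  rewrite (bigD1 i0) //= wi0 subr0 lerDl sumr_ge0 // => i _.
  by rewrite /w; case: ifP; rewrite ?subrr ?subr0.
by rewrite sumrB sumr_const card_ord -/K; lra.
Qed.

Lemma neg_part_le_min : N <= fmin a.
Proof.
have [i0 ai0 wi0] := min_weight0.
rewrite /N (bigD1 i0) //= wi0 subr0 mul1r ai0 gerDl sumr_le0 // => i _.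
by rewrite /w; case: (leP 0 (a i)) => ai; rewrite ?subrr ?mul0r // subr0 mul1r ltW.
Qed.

Lemma nonneg_part_ge : (n%:R - 1) * - fmin a <= P.
Proof. by move: hsum; rewrite sum_weight_split -/P -/N; have := neg_part_le_min; lra. Qed.

Lemma count_nonneg_gt0 : 0 < K.
Proof.
rewrite lt0r sumr_ge0 ?andbT; last by move=> i _; apply: weight_ge0.
apply/eqP => /(wsum_eq0 a weight_ge0) P0.
have : 0 < (n%:R - 1) * - fmin a.
  by rewrite mulr_gt0 ?oppr_gt0 // subr_gt0 ltr1n.
by move: nonneg_part_ge; rewrite /P P0; lra.
Qed.

Let Y : R := P / K.

Lemma oppmin_le_nonneg_mean : - fmin a <= Y.
Proof.
have K_gt0 := count_nonneg_gt0.
rewrite ler_pdivlMr // (le_trans _ nonneg_part_ge) // mulrC.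
by rewrite ler_pM2r ?oppr_gt0 // count_nonneg_le.
Qed.

Lemma nonneg_mean_gt0 : 0 < Y.
Proof. by apply: lt_le_trans oppmin_le_nonneg_mean; rewrite oppr_gt0. Qed.

Lemma jensen_nonneg_part : I Y /\ K * f Y <= \sum_i w i * f (a i).
Proof.
have nonneg_dom i : 0 < w i -> I (a i) /\ 0 <= a i.
  by rewrite /w; case: ifP => [ai _ | _]; [split | rewrite ltxx].
have [[IY _] jensen_Y] := jensen hconv (is_interval_nonneg hI) _
  (index_enum 'I_n) _ _ weight_ge0 nonneg_dom count_nonneg_gt0.
by split.
Qed.

Lemma neg_part_chord : N * f Y <= Y * \sum_i (1 - w i) * f (a i).
Proof.
have [IY _] := jensen_nonneg_part.
rewrite /N mulr_suml mulr_sumr; apply: ler_sum => i _.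
rewrite /w; case: (leP 0 (a i)) => ai; first by rewrite subrr !mul0r mulr0.
rewrite subr0 !mul1r; apply: odd_convex_le => //; first exact: ltW.
by rewrite (le_trans _ oppmin_le_nonneg_mean) // lerN2 fmin_le.
Qed.

Lemma sum_le_nonneg_mean : \sum_i a i <= n%:R * Y.
Proof.
have Y_gt0 := nonneg_mean_gt0.
have KY : K * Y = P by rewrite /Y mulrC divfK // gt_eqF // count_nonneg_gt0.
have : K * Y <= n%:R * Y.
  by rewrite ler_pM2r // (le_trans count_nonneg_le) // gerBl.
rewrite sum_weight_split -/P -/N KY; have := neg_part_le_min.
by move: hmin; lra.
Qed.

Lemma sum_points_ge0 : 0 <= \sum_i a i.
Proof.
have : (n%:R - 2) * fmin a <= 0.
  by apply: mulr_ge0_le0; rewrite ?subr_ge0 ?(ler_nat _ 2) ?ltW.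
by move: hsum; lra.
Qed.

Lemma jensen_neg_min : f (n%:R^-1 * \sum_i a i) <= n%:R^-1 * \sum_i f (a i).
Proof.
have n_gt0 : 0 < n%:R :> R by rewrite ltr0n ltnW.
have Y_gt0 := nonneg_mean_gt0.
have [IY nonneg_jensen] := jensen_nonneg_part.
set s := n%:R^-1 * \sum_i a i.
have ns : n%:R * s = \sum_i a i by rewrite mulVKf // gt_eqF.
have s_ge0 : 0 <= s by apply: mulr_ge0; [rewrite invr_ge0 ltW | exact: sum_points_ge0].
have s_le : s <= Y by rewrite ler_pdivrMl // sum_le_nonneg_mean.
have chord : Y * f s <= s * f Y.
  exact: convex_chord0 hconv _ _ (conj hI0 (lexx 0)) (conj IY (ltW Y_gt0))
    odd_f0 s_ge0 s_le.
have sum_chord : (\sum_i a i) * f Y <= Y * \sum_i f (a i).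
  rewrite (sum_weight_split a) [X in _ <= _ * X]sum_weight_split -/P -/N.
  have KY : P * f Y = Y * (K * f Y).
    by rewrite /Y mulrA divfK // gt_eqF // count_nonneg_gt0.
  rewrite mulrDl mulrDr KY; apply: lerD; last exact: neg_part_chord.
  by rewrite ler_pM2l.
rewrite ler_pdivlMl // -(ler_pM2l Y_gt0) mulrCA.
by apply: le_trans sum_chord; rewrite -ns -[X in _ <= X]mulrA ler_pM2l.
Qed.

End NegativeMinimum.
End OddConvex.

Theorem corollary3 (R : realFieldType) (I : R -> Prop) (f : R -> R)
  (hI : is_interval I) (hI0 : I 0)
  (hconv : convex_on (fun x => I x /\ 0 <= x) f)
  (hodd : forall x, I x -> I (- x) -> f (- x) = - f x)
  (n : nat) (hn : (0 < n)%N) (a : 'I_n -> R)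
  (ha : forall i, I (a i))
  (hsum : 0 <= \sum_(i < n) a i + (n%:R - 2) * fmin a) :
  f (n%:R^-1 * \sum_(i < n) a i) <= n%:R^-1 * \sum_(i < n) f (a i).
Proof.
have [n1|n_ne1] := eqVneq n 1%N.
  by subst n; rewrite !big_ord1 invr1 !mul1r.
have [min_ge0|min_lt0] := leP 0 (fmin a).
  apply: (jensen_mean hconv (is_interval_nonneg hI) _ _ hn) => i.
  by split; [exact: ha | exact: le_trans min_ge0 (fmin_le a i)].
apply: (jensen_neg_min hI hI0 hconv hodd ha) => //.
by rewrite ltn_neqAle eq_sym n_ne1.
Qed.
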